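(* Let $A=[a_{ij}]\in\mathcal{M}_n(\mathbb{H})$ be an upper triangular nilpotent matrix whose graph $\mathcal{G}_A$ is a tree. Then $W(A)$ is the closed disk centered at the origin $$W(A)=\mathbb{D}_{\mathbb{H}}\Big(0,\ \max_{\beta\in\mathbb{S}^+_{\mathbb{R}^n}}\sum_{i,j=1}^n\beta_i\beta_j|a_{ij}|\Big).$$
   Context: $\mathbb{H}$ denotes the real quaternions, $|q|^2=qq^*$. For $\mathbf{x}\in\mathbb{H}^n$, $\mathbf{x}^*$ is the conjugate transpose and $\mathbb{S}_{\mathbb{H}^n}=\{\mathbf{x}:\mathbf{x}^*\mathbf{x}=1\}$; the numerical range is $W(A)=\{\mathbf{x}^*A\mathbf{x}:\mathbf{x}\in\mathbb{S}_{\mathbb{H}^n}\}$. $\mathbb{D}_{\mathbb{H}}(c,r)=\{q\in\mathbb{H}:|q-c|\le r\}$. $\mathbb{S}^+_{\mathbb{R}^n}=\{\beta\in\mathbb{R}^n:\|\beta\|=1,\ \beta_i\ge0\ \forall i\}$. The graph $\mathcal{G}_A$ of $A=[a_{ij}]$ is the undirected graph on $\{1,\dots,n\}$ with an edge between $i$ and $j$ (a loop if $i=j$) whenever $a_{ij}\ne0$ or $a_{ji}\ne0$; loops count as cycles; $A$ is a tree if $\mathcal{G}_A$ is connected and has no cycles. *)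

From mathcomp Require Import all_boot.
From Stdlib Require Import Reals.
Set Implicit Arguments. Unset Strict Implicit. Unset Printing Implicit Defensive.

Record quat : Type := Quat { qre : R; qi : R; qj : R; qk : R }.

Definition qzero : quat := Quat 0%R 0%R 0%R 0%R.
Definition qone  : quat := Quat 1%R 0%R 0%R 0%R.
Definition qadd (p q : quat) : quat :=
  Quat (qre p + qre q)%R (qi p + qi q)%R (qj p + qj q)%R (qk p + qk q)%R.
Definition qopp (p : quat) : quat := Quat (- qre p)%R (- qi p)%R (- qj p)%R (- qk p)%R.
Definition qsub (p q : quat) : quat := qadd p (qopp q).
Definition qmul (p q : quat) : quat :=
  let a1 := qre p in let b1 := qi p in let c1 := qj p in let d1 := qk p in
  let a2 := qre q in let b2 := qi q in let c2 := qj q in let d2 := qk q in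
  Quat (a1*a2 - b1*b2 - c1*c2 - d1*d2)%R
       (a1*b2 + b1*a2 + c1*d2 - d1*c2)%R
       (a1*c2 - b1*d2 + c1*a2 + d1*b2)%R
       (a1*d2 + b1*c2 - c1*b2 + d1*a2)%R.
Definition qconj (p : quat) : quat := Quat (qre p) (- qi p)%R (- qj p)%R (- qk p)%R.
Definition qnorm (p : quat) : R := sqrt (qre (qmul p (qconj p))).

Definition qeq_dec (p q : quat) : {p = q} + {p <> q}.
Proof.
destruct p as [a b c d], q as [a' b' c' d'].
destruct (Req_EM_T a a') as [e1|n1]; [|right; congruence].
destruct (Req_EM_T b b') as [e2|n2]; [|right; congruence].
destruct (Req_EM_T c c') as [e3|n3]; [|right; congruence].
destruct (Req_EM_T d d') as [e4|n4]; [|right; congruence].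
left; subst; reflexivity.
Defined.

Definition qnz (q : quat) : bool := if qeq_dec q qzero then false else true.

Definition qmx (n : nat) := 'I_n -> 'I_n -> quat.
Definition qvec (n : nat) := 'I_n -> quat.

Definition qmxmul n (A B : qmx n) : qmx n :=
  fun i j => \big[qadd/qzero]_(k < n) qmul (A i k) (B k j).
Definition qmx1 n : qmx n := fun i j => if i == j then qone else qzero.
Fixpoint qmxpow n (A : qmx n) (k : nat) : qmx n :=
  match k with O => @qmx1 n | S k' => qmxmul A (qmxpow A k') end.

Definition qmx_nilpotent n (A : qmx n) : Prop :=
  exists k, forall i j, qmxpow A k i j = qzero.
Definition qmx_upper_triangular n (A : qmx n) : Prop :=
  forall i j : 'I_n, (j < i)%N -> A i j = qzero.

Definition qdot n (x y : qvec n) : quat :=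
  \big[qadd/qzero]_(i < n) qmul (qconj (x i)) (y i).
Definition qquad n (A : qmx n) (x : qvec n) : quat :=
  \big[qadd/qzero]_(i < n) \big[qadd/qzero]_(j < n)
     qmul (qmul (qconj (x i)) (A i j)) (x j).

Definition in_qsphere n (x : qvec n) : Prop := qdot x x = qone.

Definition numrange n (A : qmx n) : quat -> Prop :=
  fun q => exists x : qvec n, in_qsphere x /\ q = qquad A x.

Definition qdisk (c : quat) (r : R) : quat -> Prop :=
  fun q => (qnorm (qsub q c) <= r)%R.

Definition in_pos_sphere n (b : 'I_n -> R) : Prop :=
  \big[Rplus/0%R]_(i < n) (b i * b i)%R = 1%R /\ forall i, (0 <= b i)%R.

Definition qmx_adj n (A : qmx n) : rel 'I_n :=
  fun i j => qnz (A i j) || qnz (A j i).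

Definition qmx_has_cycle n (A : qmx n) : Prop :=
  (exists i, qmx_adj A i i) \/
  (exists s : seq 'I_n, [/\ uniq s, (3 <= size s)%N & cycle (qmx_adj A) s]).

Definition qmx_connected n (A : qmx n) : Prop :=
  forall i j : 'I_n, connect (qmx_adj A) i j.

Definition qmx_tree n (A : qmx n) : Prop :=
  qmx_connected A /\ ~ qmx_has_cycle A.

Definition beta_form n (A : qmx n) (b : 'I_n -> R) : R :=
  \big[Rplus/0%R]_(i < n) \big[Rplus/0%R]_(j < n) (b i * b j * qnorm (A i j))%R.

From Stdlib Require Import Reals Lra Psatz FunctionalExtensionality.
From mathcomp Require Import all_boot Rstruct.
From mathcomp Require all_order all_algebra all_classical all_reals all_analysis.
From mathcomp Require Rstruct_topology.

Set Implicit Arguments.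
Unset Strict Implicit.
Unset Printing Implicit Defensive.

(* Every x^* A x is bounded in norm by beta_form A (|x_1|, ..., |x_n|), so
   W(A) lies in the disk.  Conversely, since G_A is a tree and each edge
   carries exactly one nonzero entry, the unit phases u_i can be chosen
   along the tree, edge by edge, so that u_i^* a_ij u_j = |a_ij| w for a
   prescribed unit w; then x_i = b_i u_i gives x^* A x = beta_form A b * w.
   As beta_form A is continuous on the compact connected set S^+, it attains
   its maximum and takes every value between 0 (at a coordinate vector, the
   diagonal being zero) and that maximum, so every point of the disk is
   reached. *)

Local Open Scope R_scope.

Section Quaternions.

Definition qnorm2 (p : quat) : R :=
  qre p * qre p + qi p * qi p + qj p * qj p + qk p * qk p.

Definition qscale (c : R) (p : quat) : quat :=
  Quat (c * qre p) (c * qi p) (c * qj p) (c * qk p).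

Ltac quat_ring :=
  repeat match goal with p : quat |- _ => destruct p end;
  unfold qsub, qmul, qconj, qscale, qadd, qopp, qnorm2, qone, qzero; simpl;
  lazymatch goal with
  | |- Quat _ _ _ _ = Quat _ _ _ _ => f_equal; ring
  | _ => ring
  end.

Lemma qnorm2_ge0 p : 0 <= qnorm2 p.
Proof. rewrite /qnorm2; nra. Qed.

Lemma qnormE p : qnorm p = sqrt (qnorm2 p).
Proof. by rewrite /qnorm; congr sqrt; quat_ring. Qed.

Lemma qnorm_ge0 p : 0 <= qnorm p.
Proof. by rewrite qnormE; apply: sqrt_pos. Qed.

Lemma qnorm_sqr p : qnorm p * qnorm p = qnorm2 p.
Proof. by rewrite qnormE; apply/sqrt_sqrt/qnorm2_ge0. Qed.

Lemma qnorm2M p q : qnorm2 (qmul p q) = qnorm2 p * qnorm2 q.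
Proof. quat_ring. Qed.

Lemma qnormM p q : qnorm (qmul p q) = qnorm p * qnorm q.
Proof. by rewrite !qnormE qnorm2M sqrt_mult //; apply: qnorm2_ge0. Qed.

Lemma qnorm_conj p : qnorm (qconj p) = qnorm p.
Proof. by rewrite !qnormE; congr sqrt; quat_ring. Qed.

Lemma qnormZ c p : 0 <= c -> qnorm (qscale c p) = c * qnorm p.
Proof.
move=> c_ge0; rewrite !qnormE.
have -> : qnorm2 (qscale c p) = (c * c) * qnorm2 p by quat_ring.
by rewrite sqrt_mult ?sqrt_square //; [nra | apply: qnorm2_ge0].
Qed.

Lemma qnorm0 : qnorm qzero = 0.
Proof. by rewrite qnormE -sqrt_0; congr sqrt; quat_ring. Qed.

Lemma qnorm1 : qnorm qone = 1.
Proof. by rewrite qnormE -sqrt_1; congr sqrt; quat_ring. Qed.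

Lemma qnorm_eq0 p : qnorm p = 0 -> p = qzero.
Proof.
rewrite qnormE => /(sqrt_eq_0 _ (qnorm2_ge0 p)).
case: p => a b c d; rewrite /qnorm2 /qzero /= => h.
by have [-> [-> [-> ->]]] : a = 0 /\ b = 0 /\ c = 0 /\ d = 0 by nra.
Qed.

Lemma qnorm_gt0 p : p <> qzero -> 0 < qnorm p.
Proof.
move=> p_neq0; case: (Rle_lt_or_eq_dec _ _ (qnorm_ge0 p)) => // /esym.
by move/qnorm_eq0.
Qed.

Lemma qre_le_qnorm p : qre p <= qnorm p.
Proof.
apply: Rle_trans (RRle_abs _) _; rewrite -sqrt_Rsqr_abs qnormE.
by apply: sqrt_le_1_alt; rewrite /Rsqr /qnorm2; nra.
Qed.

Lemma qnormD p q : qnorm (qadd p q) <= qnorm p + qnorm q.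
Proof.
have cross : qre (qmul p (qconj q)) <= qnorm p * qnorm q.
  by rewrite -(qnorm_conj q) -qnormM; apply: qre_le_qnorm.
have expand : qnorm2 (qadd p q) = qnorm2 p + qnorm2 q + 2 * qre (qmul p (qconj q)).
  by quat_ring.
have := qnorm_ge0 p; have := qnorm_ge0 q => q_ge0 p_ge0.
rewrite qnormE -(sqrt_square (qnorm p + qnorm q)); last lra.
apply: sqrt_le_1_alt; rewrite expand -(qnorm_sqr p) -(qnorm_sqr q); nra.
Qed.

Lemma qnorm_sum (I : Type) (r : seq I) (P : pred I) (F : I -> quat) :
  qnorm (\big[qadd/qzero]_(i <- r | P i) F i) <=
  \big[Rplus/0]_(i <- r | P i) qnorm (F i).
Proof.
apply: (big_ind2 (fun p x => qnorm p <= x)) => [|p1 x1 p2 x2 h1 h2|i _].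
- by rewrite qnorm0; lra.
- by have := qnormD p1 p2; lra.
- exact: Rle_refl.
Qed.

Lemma qre_sum (I : Type) (r : seq I) (F : I -> quat) :
  qre (\big[qadd/qzero]_(i <- r) F i) = \big[Rplus/0]_(i <- r) qre (F i).
Proof. by elim/big_rec2: _ => // i x p _ <-. Qed.

Lemma qsubr0 q : qsub q qzero = q.
Proof. quat_ring. Qed.

Lemma qconjZ c p : qconj (qscale c p) = qscale c (qconj p).
Proof. quat_ring. Qed.

Lemma qmulZl c p q : qmul (qscale c p) q = qscale c (qmul p q).
Proof. quat_ring. Qed.

Lemma qmulZr c p q : qmul p (qscale c q) = qscale c (qmul p q).
Proof. quat_ring. Qed.

Lemma qscaleA a b p : qscale a (qscale b p) = qscale (a * b) p.
Proof. quat_ring. Qed.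

Lemma qscale1 p : qscale 1 p = p.
Proof. quat_ring. Qed.

Lemma qscale0 p : qscale 0 p = qzero.
Proof. quat_ring. Qed.

Lemma qscaler0 c : qscale c qzero = qzero.
Proof. quat_ring. Qed.

Lemma qmul0r p : qmul qzero p = qzero.
Proof. quat_ring. Qed.

Lemma qmulr0 p : qmul p qzero = qzero.
Proof. quat_ring. Qed.

Lemma qmul_conjl p : qmul (qconj p) p = qscale (qnorm2 p) qone.
Proof. quat_ring. Qed.

Lemma qnorm2E p : qnorm2 p = qre (qmul (qconj p) p).
Proof. by rewrite qmul_conjl /=; ring. Qed.

Lemma qsum_scale (I : Type) (r : seq I) (f : I -> R) p :
  \big[qadd/qzero]_(i <- r) qscale (f i) p = qscale (\big[Rplus/0]_(i <- r) f i) p.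
Proof. by elim/big_rec2: _ => [|i x q _ ->]; [rewrite qscale0 | quat_ring]. Qed.

Lemma qpolar q : exists2 w, qnorm w = 1 & q = qscale (qnorm q) w.
Proof.
have [q0|q_neq0] := qeq_dec q qzero.
  by exists qone; rewrite ?qnorm1 // q0 qnorm0 qscale0.
have q_gt0 := qnorm_gt0 q_neq0.
exists (qscale (/ qnorm q) q).
  by rewrite qnormZ; [field | apply/Rlt_le/Rinv_0_lt_compat]; lra.
by rewrite qscaleA Rinv_r ?qscale1 //; lra.
Qed.

Lemma qnzP p : reflect (p <> qzero) (qnz p).
Proof. by rewrite /qnz; case: qeq_dec => h; constructor. Qed.

Lemma unit_phase_right a u w : a <> qzero -> qnorm u = 1 -> qnorm w = 1 ->
  exists2 x, qnorm x = 1 & qmul (qmul (qconj u) a) x = qscale (qnorm a) w.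
Proof.
move=> /qnorm_gt0 a_gt0 u1 w1.
have u2 : qnorm2 u = 1 by rewrite -qnorm_sqr u1; ring.
exists (qscale (/ qnorm a) (qmul (qmul (qconj a) u) w)).
  rewrite qnormZ; last by apply/Rlt_le/Rinv_0_lt_compat.
  by rewrite !qnormM qnorm_conj u1 w1; field; lra.
rewrite qmulZr.
have -> : qmul (qmul (qconj u) a) (qmul (qmul (qconj a) u) w) =
          qscale (qnorm2 a * qnorm2 u) w by quat_ring.
by rewrite qscaleA u2 -qnorm_sqr; congr qscale; field; lra.
Qed.

Lemma unit_phase_left a u w : a <> qzero -> qnorm u = 1 -> qnorm w = 1 ->
  exists2 x, qnorm x = 1 & qmul (qmul (qconj x) a) u = qscale (qnorm a) w.
Proof.
move=> /qnorm_gt0 a_gt0 u1 w1.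
have u2 : qnorm2 u = 1 by rewrite -qnorm_sqr u1; ring.
exists (qscale (/ qnorm a) (qmul (qmul a u) (qconj w))).
  rewrite qnormZ; last by apply/Rlt_le/Rinv_0_lt_compat.
  by rewrite !qnormM qnorm_conj u1 w1; field; lra.
rewrite qconjZ !qmulZl.
have -> : qmul (qmul (qconj (qmul (qmul a u) (qconj w))) a) u =
          qscale (qnorm2 a * qnorm2 u) w by quat_ring.
by rewrite qscaleA u2 -qnorm_sqr; congr qscale; field; lra.
Qed.

End Quaternions.

Section TreeGrowth.

Variables (n : nat) (e : rel 'I_n).
Hypothesis e_sym : symmetric e.
Hypothesis e_acyclic :
  ~ exists s : seq 'I_n, [/\ uniq s, (3 <= size s)%N & cycle e s].
Hypothesis e_connected : forall i j, connect e i j.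

Definition connected_within (S : {set 'I_n}) :=
  forall a b, a \in S -> b \in S ->
  exists p, [/\ path e a p, last a p = b & {subset p <= S}].

Lemma connected_within_set1 i : connected_within [set i].
Proof. by move=> a b /set1P -> /set1P ->; exists [::]. Qed.

Lemma path_exit (S : {set 'I_n}) x p :
  x \in S -> path e x p -> last x p \notin S ->
  exists s v, [/\ s \in S, v \notin S & e s v].
Proof.
elim: p x => [|y p IHp] x xS /=; first by rewrite xS.
case/andP=> exy ypath ylast.
have [yS|yS] := boolP (y \in S); first exact: IHp ylast.
by exists x, y.
Qed.

(* Two distinct neighbours of v in S, joined by a path inside S, would close
   a cycle through v. *)
Lemma unique_neighbor (S : {set 'I_n}) s s' v :
  connected_within S -> s \in S -> s' \in S -> v \notin S ->
  e s v -> e s' v -> s' = s.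
Proof.
move=> cS sS s'S vS esv es'v; apply/eqP; apply: contraT => s'_neq_s.
have [p [ppath plast psub]] := cS s s' sS s'S.
case: (shortenP ppath) plast => q qpath quniq qsub qlast.
have vs : v != s by apply: contraNneq vS => ->.
have vq : v \notin q by move: vS; apply: contraNN => /qsub /psub.
case: e_acyclic; exists (v :: s :: q); split.
- by rewrite cons_uniq quniq andbT in_cons negb_or vs vq.
- case: q qlast {qpath quniq qsub vq} => [/= s_eq_s'|//].
  by rewrite s_eq_s' eqxx in s'_neq_s.
- by rewrite /= e_sym esv rcons_path qpath qlast.
Qed.

Lemma connected_within_setU1 (S : {set 'I_n}) s v :
  connected_within S -> s \in S -> e s v -> connected_within (v |: S).
Proof.
move=> cS sS esv.
have widen p : {subset p <= S} -> {subset p <= v |: S}.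
  by move=> pS x /pS xS; rewrite in_setU1 xS orbT.
move=> a b /setU1P [->|aS] /setU1P [->|bS].
- by exists [::].
- have [p [ppath <- pS]] := cS s b sS bS.
  exists (s :: p); split=> //=; first by rewrite e_sym esv.
  by move=> x /predU1P [->|/pS]; rewrite in_setU1 ?sS ?orbT // => ->; rewrite orbT.
- have [p [ppath plast pS]] := cS a s aS sS.
  exists (rcons p v); split; rewrite ?rcons_path ?ppath ?plast ?last_rcons //.
  by move=> x; rewrite mem_rcons in_cons => /predU1P [->|/pS xS];
    rewrite in_setU1 ?eqxx // xS orbT.
- by have [p [? ? /widen]] := cS a b aS bS; exists p.
Qed.

Variables (X : Type) (P : {set 'I_n} -> X -> Prop).
Hypothesis P_extend : forall S x s v,
  P S x -> s \in S -> v \notin S -> e s v ->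
  (forall s', s' \in S -> e s' v -> s' = s) -> exists x', P (v |: S) x'.

Lemma tree_grow i0 x0 : P [set i0] x0 -> exists x, P [set: 'I_n] x.
Proof.
have grow k : forall S x, (#|~: S| < k)%N -> i0 \in S -> connected_within S ->
    P S x -> exists x', P [set: 'I_n] x'.
  elim: k => [//|k IHk] S x Sk i0S cS PS.
  have [<-|] := eqVneq S [set: 'I_n]; first by exists x.
  rewrite -properT => /properP [_ [y _ yS]].
  have [s [v [sS vS esv]]] : exists s v, [/\ s \in S, v \notin S & e s v].
    by have /connectP [p ppath ylast] := e_connected i0 y;
      apply: (path_exit i0S ppath); rewrite -ylast.
  have [x' Px'] := P_extend PS sS vS esv
    (fun s' s'S es'v => unique_neighbor cS sS s'S vS esv es'v).
  apply: (IHk (v |: S) x') => //; last exact: connected_within_setU1 cS sS esv.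
  - rewrite ltnS in Sk; apply: (leq_trans _ Sk); apply: proper_card.
    by rewrite properC properUr // sub1set.
  - by rewrite in_setU1 i0S orbT.
move=> P0; apply: (grow _ [set i0] x0 (ltnSn _) (set11 i0)) => //.
exact: connected_within_set1.
Qed.

End TreeGrowth.

Section PhaseAlignment.

Variables (n : nat) (A : qmx n).

(* Each edge of G_A carries exactly one nonzero entry; in particular there
   are no loops. *)
Definition qmx_oriented := forall i j, A i j <> qzero -> A j i = qzero.

Lemma acyclic_diag0 : ~ qmx_has_cycle A -> forall i, A i i = qzero.
Proof.
move=> A_acyclic i; case: (qeq_dec (A i i) qzero) => // Aii.
by case: A_acyclic; left; exists i; rewrite /qmx_adj; apply/orP; left; apply/qnzP.
Qed.

Lemma upper_triangular_oriented :
  qmx_upper_triangular A -> (forall i, A i i = qzero) -> qmx_oriented.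
Proof.
move=> A_up A_diag i j Aij; case: (ltngtP i j) => [ij|ji|/val_inj ij].
- exact: A_up.
- by case: Aij; apply: A_up.
- by case: Aij; rewrite ij A_diag.
Qed.

Lemma qmx_adjl i j : A i j <> qzero -> qmx_adj A i j.
Proof. by move/qnzP; rewrite /qmx_adj => ->. Qed.

Lemma qmx_adjr i j : A j i <> qzero -> qmx_adj A i j.
Proof. by move/qnzP; rewrite /qmx_adj orbC => ->. Qed.

Definition phase_aligned (w : quat) (S : {set 'I_n}) (u : qvec n) :=
  (forall i, qnorm (u i) = 1) /\
  forall i j, i \in S -> j \in S -> A i j <> qzero ->
    qmul (qmul (qconj (u i)) (A i j)) (u j) = qscale (qnorm (A i j)) w.

Hypothesis A_oriented : qmx_oriented.

Lemma phase_aligned_extend w S u s v :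
  qnorm w = 1 -> phase_aligned w S u -> s \in S -> v \notin S ->
  (forall s', s' \in S -> qmx_adj A s' v -> s' = s) ->
  exists u', phase_aligned w (v |: S) u'.
Proof.
move=> w1 [u1 u_aligned] sS vS s_unique.
have [x x1 [x_right x_left]] : exists2 x, qnorm x = 1 &
    (A s v <> qzero ->
       qmul (qmul (qconj (u s)) (A s v)) x = qscale (qnorm (A s v)) w) /\
    (A v s <> qzero ->
       qmul (qmul (qconj x) (A v s)) (u s) = qscale (qnorm (A v s)) w).
  have [Asv0|Asv] := qeq_dec (A s v) qzero.
    have [Avs0|Avs] := qeq_dec (A v s) qzero; first by exists qone; rewrite ?qnorm1.
    by have [x ? ?] := unit_phase_left Avs (u1 s) w1; exists x.
  have [x ? ?] := unit_phase_right Asv (u1 s) w1.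
  by exists x => //; split=> // Avs; case: Avs; apply: A_oriented.
exists (fun i => if i == v then x else u i); split.
  by move=> i; case: ifP.
have neq_v i : i \in S -> (i == v) = false.
  by move=> iS; apply/eqP => iv; rewrite -iv iS in vS.
move=> i j /setU1P [->|iS] /setU1P [->|jS] Aij; rewrite ?eqxx ?neq_v //.
- by case: (Aij (A_oriented Aij)).
- by have j_eq_s := s_unique j jS (qmx_adjr Aij); subst j; apply: x_left.
- by have i_eq_s := s_unique i iS (qmx_adjl Aij); subst i; apply: x_right.
- exact: u_aligned.
Qed.

Lemma tree_phase_aligned w (i0 : 'I_n) :
  qmx_tree A -> qnorm w = 1 -> exists u, phase_aligned w [set: 'I_n] u.
Proof.
move=> [A_connected A_acyclic] w1.
apply: (tree_grow (e := qmx_adj A) _ _ A_connected _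
  (i0 := i0) (x0 := fun _ => qone)).
- by move=> i j; rewrite /qmx_adj orbC.
- by move=> cyc; apply: A_acyclic; right.
- move=> S u s v u_aligned sS vS _ s_unique.
  exact: phase_aligned_extend w1 u_aligned sS vS s_unique.
- split=> [_|i j /set1P -> /set1P ->]; first exact: qnorm1.
  by rewrite acyclic_diag0.
Qed.

End PhaseAlignment.

Lemma sumR_le (I : Type) (r : seq I) (P : pred I) (F G : I -> R) :
  (forall i, P i -> F i <= G i) ->
  \big[Rplus/0]_(i <- r | P i) F i <= \big[Rplus/0]_(i <- r | P i) G i.
Proof. by move=> FG; apply: (big_ind2 Rle) => //; [lra | move=> *; lra]. Qed.

Lemma continuity_sum (I : Type) (r : seq I) (f : I -> R -> R) :
  (forall i, continuity (f i)) ->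
  continuity (fun s => \big[Rplus/0]_(i <- r) f i s).
Proof.
move=> f_cont; elim: r => [|i r IHr].
  by under [fun s => _]functional_extensionality do rewrite big_nil;
    apply: continuity_const.
by under [fun s => _]functional_extensionality do rewrite big_cons;
  apply: continuity_plus.
Qed.

Section BetaForm.

Variable n : nat.

Definition sqnorm (b : 'I_n -> R) := \big[Rplus/0]_(i < n) (b i * b i).

Definition unit_vector (i0 : 'I_n) : 'I_n -> R :=
  fun i => if i == i0 then 1 else 0.

Definition segment (b0 b1 : 'I_n -> R) (s : R) : 'I_n -> R :=
  fun i => (1 - s) * b0 i + s * b1 i.

Lemma in_pos_sphere_unit_vector i0 : in_pos_sphere (unit_vector i0).
Proof.
split=> [|i]; last by rewrite /unit_vector; case: eqP => _; lra.
rewrite (bigD1 i0) //= big1 /unit_vector ?eqxx => [|i /negbTE ->]; ring.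
Qed.

Lemma sqnorm_le_scale c (b d : 'I_n -> R) :
  (forall i, 0 <= c * b i <= d i) -> c * c * sqnorm b <= sqnorm d.
Proof.
move=> cb_le_d; rewrite /sqnorm big_distrr; apply: sumR_le => i _ /=.
have [cb_ge0 cb_le] := cb_le_d i.
have -> : c * c * (b i * b i) = (c * b i) * (c * b i) by ring.
exact: Rmult_le_compat.
Qed.

Lemma in_pos_sphere_normalize (b : 'I_n -> R) :
  (forall i, 0 <= b i) -> 0 < sqnorm b ->
  in_pos_sphere (fun i => / sqrt (sqnorm b) * b i).
Proof.
move=> b_ge0 b_pos; have sqrt_pos := sqrt_lt_R0 _ b_pos.
split=> [|i]; last by apply: Rmult_le_pos; [apply/Rlt_le/Rinv_0_lt_compat|].
transitivity (/ sqrt (sqnorm b) * / sqrt (sqnorm b) * sqnorm b).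
  by rewrite /sqnorm big_distrr; apply: eq_bigr => i _ /=; ring.
by rewrite -Rinv_mult sqrt_sqrt; [field|]; lra.
Qed.

Lemma segment0 b0 b1 : segment b0 b1 0 = b0.
Proof. by apply: functional_extensionality => i; rewrite /segment; ring. Qed.

Lemma segment1 b0 b1 : segment b0 b1 1 = b1.
Proof. by apply: functional_extensionality => i; rewrite /segment; ring. Qed.

Lemma segment_ge0 b0 b1 s i :
  0 <= s <= 1 -> (forall i, 0 <= b0 i) -> (forall i, 0 <= b1 i) ->
  0 <= segment b0 b1 s i.
Proof.
move=> [s_ge0 s_le1] b0_ge0 b1_ge0; rewrite /segment.
by have := b0_ge0 i; have := b1_ge0 i; nra.
Qed.

Lemma sqnorm_segment_gt0 b0 b1 s :
  0 <= s <= 1 -> in_pos_sphere b0 -> in_pos_sphere b1 ->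
  0 < sqnorm (segment b0 b1 s).
Proof.
move=> s_range [b0_norm b0_ge0] [b1_norm b1_ge0].
have [s_ge0 s_le1] := s_range.
have b0_1 : sqnorm b0 = 1 by [].
have b1_1 : sqnorm b1 = 1 by [].
have b0_le : (1 - s) * (1 - s) * sqnorm b0 <= sqnorm (segment b0 b1 s).
  apply: sqnorm_le_scale => i; rewrite /segment.
  by have := b0_ge0 i; have := b1_ge0 i => b1i b0i; split; nra.
have b1_le : s * s * sqnorm b1 <= sqnorm (segment b0 b1 s).
  apply: sqnorm_le_scale => i; rewrite /segment.
  by have := b0_ge0 i; have := b1_ge0 i => b1i b0i; split; nra.
rewrite b0_1 b1_1 in b0_le b1_le.
by have := Rle_0_sqr (2 * s - 1); rewrite /Rsqr; nra.
Qed.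

Variable A : qmx n.

Lemma beta_formZ c (b : 'I_n -> R) :
  beta_form A (fun i => c * b i) = c * c * beta_form A b.
Proof.
rewrite /beta_form big_distrr; apply: eq_bigr => i _.
by rewrite big_distrr; apply: eq_bigr => j _ /=; ring.
Qed.

Lemma beta_form_unit_vector i0 :
  A i0 i0 = qzero -> beta_form A (unit_vector i0) = 0.
Proof.
move=> A_i0; rewrite /beta_form big1 // => i _; rewrite big1 // => j _.
rewrite /unit_vector; case: eqP => [->|_]; last ring.
by case: eqP => [->|_]; rewrite ?A_i0 ?qnorm0; ring.
Qed.

Lemma continuity_segment b0 b1 i : continuity (fun s => segment b0 b1 s i).
Proof. rewrite /segment; reg. Qed.

Lemma continuity_beta_form_segment b0 b1 :
  continuity (fun s => beta_form A (segment b0 b1 s)).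
Proof.
apply: continuity_sum => i; apply: continuity_sum => j.
apply: continuity_mult; last by apply: continuity_const.
by apply: continuity_mult; apply: continuity_segment.
Qed.

Lemma continuity_sqnorm_segment b0 b1 :
  continuity (fun s => sqnorm (segment b0 b1 s)).
Proof.
by apply: continuity_sum => i; apply: continuity_mult; apply: continuity_segment.
Qed.

(* Along the segment from a coordinate vector to b1 the homogeneous function
   beta_form - t * sqnorm changes sign; its zero, normalized, lies on S^+
   with value t. *)
Lemma beta_form_ivt i0 (b1 : 'I_n -> R) t :
  A i0 i0 = qzero -> in_pos_sphere b1 -> 0 <= t <= beta_form A b1 ->
  exists b, in_pos_sphere b /\ beta_form A b = t.
Proof.
move=> A_i0 b1_sphere t_range.
have e_sphere := in_pos_sphere_unit_vector i0.
pose G s := beta_form A (segment (unit_vector i0) b1 s) -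
            t * sqnorm (segment (unit_vector i0) b1 s).
have [s [s_range Gs]] : {s | 0 <= s <= 1 /\ G s = 0}.
  apply: IVT_cor; [|lra|].
  - apply: continuity_minus; first exact: continuity_beta_form_segment.
    apply: continuity_mult; first exact: continuity_const.
    exact: continuity_sqnorm_segment.
  - rewrite /G segment0 segment1 beta_form_unit_vector // /sqnorm.
    rewrite (proj1 e_sphere) (proj1 b1_sphere); nra.
rewrite /G in Gs; set b := segment (unit_vector i0) b1 s in Gs.
have b_pos : 0 < sqnorm b := sqnorm_segment_gt0 s_range e_sphere b1_sphere.
exists (fun i => / sqrt (sqnorm b) * b i); split.
  apply: in_pos_sphere_normalize b_pos => i.
  exact: segment_ge0 s_range (proj2 e_sphere) (proj2 b1_sphere).
have b_val : beta_form A b = t * sqnorm b by lra.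
by rewrite beta_formZ b_val -Rinv_mult sqrt_sqrt; [field|]; lra.
Qed.

End BetaForm.

Section NumericalRange.

Variables (n : nat) (A : qmx n).

Lemma in_pos_sphere_qnorm (x : qvec n) :
  in_qsphere x -> in_pos_sphere (fun i => qnorm (x i)).
Proof.
move=> x_unit; split=> [|i]; last exact: qnorm_ge0.
have := f_equal qre x_unit; rewrite /qdot qre_sum /= => <-.
by apply: eq_bigr => i _; rewrite qnorm_sqr qnorm2E.
Qed.

Lemma qquad_norm_le (x : qvec n) :
  qnorm (qquad A x) <= beta_form A (fun i => qnorm (x i)).
Proof.
apply: Rle_trans (qnorm_sum _ _ _) _; apply: sumR_le => i _.
apply: Rle_trans (qnorm_sum _ _ _) _; apply: sumR_le => j _.
by rewrite /= !qnormM qnorm_conj; apply: Req_le; ring.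
Qed.

Lemma in_qsphere_scale (b : 'I_n -> R) (u : qvec n) :
  (forall i, qnorm (u i) = 1) -> in_pos_sphere b ->
  in_qsphere (fun i => qscale (b i) (u i)).
Proof.
move=> u1 [b_norm _]; rewrite /in_qsphere /qdot -[qone]qscale1 -b_norm -qsum_scale.
apply: eq_bigr => i _.
by rewrite qconjZ qmulZl qmulZr qmul_conjl -qnorm_sqr u1 !qscaleA; congr qscale; ring.
Qed.

Lemma qquad_aligned w (u : qvec n) (b : 'I_n -> R) :
  phase_aligned A w [set: 'I_n] u ->
  qquad A (fun i => qscale (b i) (u i)) = qscale (beta_form A b) w.
Proof.
move=> [_ u_aligned]; rewrite /qquad /beta_form -qsum_scale.
apply: eq_bigr => i _; rewrite -qsum_scale; apply: eq_bigr => j _.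
rewrite qconjZ qmulZl qmulZl qmulZr qscaleA.
have [->|Aij] := qeq_dec (A i j) qzero.
  by rewrite qmulr0 qmul0r qnorm0 Rmult_0_r qscale0 qscaler0.
by rewrite u_aligned ?in_setT // qscaleA.
Qed.

Lemma numrange_aligned w (u : qvec n) (b : 'I_n -> R) :
  phase_aligned A w [set: 'I_n] u -> in_pos_sphere b ->
  numrange A (qscale (beta_form A b) w).
Proof.
move=> u_aligned b_sphere; exists (fun i => qscale (b i) (u i)); split.
  exact: in_qsphere_scale (proj1 u_aligned) b_sphere.
by rewrite (qquad_aligned _ u_aligned).
Qed.

End NumericalRange.

Module PositiveSphere.

Import all_order all_algebra all_classical all_reals all_analysis Rstruct_topology.
Import Order.TTheory GRing.Theory Num.Theory ArrowAsProduct.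
Local Open Scope classical_set_scope.
Local Open Scope ring_scope.

Section Compactness.

Variable n : nat.

Lemma continuous_sum (I : Type) (r : seq I) (F : I -> ('I_n -> R) -> R) :
  (forall i, continuous (F i)) ->
  continuous (fun b => \big[Rplus/0%R]_(i <- r) F i b).
Proof.
move=> F_cont; elim: r => [|i r IHr].
  have -> : (fun b => \big[Rplus/0%R]_(i <- [::]) F i b) = fun=> 0%R.
    by apply: boolp.funext => b; rewrite big_nil.
  exact: cst_continuous.
have -> : (fun b => \big[Rplus/0%R]_(i <- i :: r) F i b) =
    (fun b => F i b + \big[Rplus/0%R]_(i <- r) F i b).
  by apply: boolp.funext => b; rewrite big_cons.
by move=> b; apply: (@cvgD _ R^o); [apply: F_cont | apply: IHr].
Qed.

Lemma continuous_coord i : continuous (fun b : 'I_n -> R => b i).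
Proof. exact: proj_continuous. Qed.

Lemma continuous_sqnorm : continuous (fun b : 'I_n -> R => sqnorm b).
Proof.
apply: continuous_sum => i b.
by apply: cvgM; apply: continuous_coord.
Qed.

Lemma continuous_beta_form (A : qmx n) : continuous (beta_form A).
Proof.
apply: continuous_sum => i; apply: continuous_sum => j b.
by apply: cvgM; [apply: cvgM; apply: continuous_coord | apply: cvg_cst].
Qed.

Lemma pos_sphere_sub_cube (b : 'I_n -> R) i :
  in_pos_sphere b -> `[0%R, 1%R]%classic (b i).
Proof.
move=> [b_norm b_ge0]; rewrite /= in_itv /=.
have bi_ge0 : 0 <= b i by apply/RleP.
have bi2_le1 : b i * b i <= 1.
  apply: (@le_trans _ _ (\big[Rplus/0%R]_(j < n) (b j * b j)%R)); last by rewrite b_norm.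
  rewrite (bigD1 i) //= RplusE lerDl.
  by apply: sumr_ge0 => j _; apply: mulr_ge0; apply/RleP.
rewrite bi_ge0 /= leNgt; apply/negP => bi_gt1.
by move: bi2_le1; rewrite leNgt -[1]mulr1 ltr_pM.
Qed.

Lemma pos_sphere_closed : closed [set b : 'I_n -> R | in_pos_sphere b].
Proof.
have -> : [set b : 'I_n -> R | in_pos_sphere b] =
    (fun b => sqnorm b) @^-1` [set 1%R] `&`
    \bigcap_(i in [set: 'I_n]) ((fun b => b i) @^-1` [set x | 0 <= x]).
  apply/seteqP; split=> b [b_norm b_ge0]; split=> //.
    by move=> i _; apply/RleP.
  by move=> i; apply/RleP; apply: b_ge0.
apply: closedI.
  by apply: preimage_closed; [move=> b _; apply: continuous_sqnorm | apply: closed_eq].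
apply: closed_bigI => i _; apply: preimage_closed; last exact: closed_ge.
by move=> b _; apply: continuous_coord.
Qed.

Lemma pos_sphere_compact : compact [set b : 'I_n -> R | in_pos_sphere b].
Proof.
apply: (subclosed_compact pos_sphere_closed
  (tychonoff (fun _ : 'I_n => @segment_compact _ 0%R 1%R))).
by move=> b b_sphere i; apply: pos_sphere_sub_cube.
Qed.

Lemma argmax (F : ('I_n -> R) -> R) (i0 : 'I_n) :
  continuous F ->
  exists b, in_pos_sphere b /\ forall b', in_pos_sphere b' -> Rle (F b') (F b).
Proof.
move=> F_cont.
have [b b_sphere b_max] := compact_EVT_max
  (ex_intro _ (unit_vector i0) (in_pos_sphere_unit_vector i0))
  pos_sphere_compact (continuous_subspaceT F_cont).
exists b; split; first by move: b_sphere; rewrite inE.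
by move=> b' b'_sphere; apply/RleP; apply: b_max; rewrite inE.
Qed.

End Compactness.

End PositiveSphere.

Theorem theorem3p5 (n : nat) (A : qmx n) :
  (0 < n)%N ->
  qmx_upper_triangular A ->
  qmx_nilpotent A ->
  qmx_tree A ->
  exists r : R,
    ((exists b, in_pos_sphere b /\ beta_form A b = r) /\
     (forall b, in_pos_sphere b -> (beta_form A b <= r)%R)) /\
    (forall q : quat, numrange A q <-> qdisk qzero r q).
Proof.
move=> n_gt0 A_upper _ A_tree.
have A_diag0 := acyclic_diag0 (proj2 A_tree).
have A_oriented := upper_triangular_oriented A_upper A_diag0.
pose i0 : 'I_n := Ordinal n_gt0.
have [bmax [bmax_sphere bmax_ge]] :=
  PositiveSphere.argmax i0 (PositiveSphere.continuous_beta_form (A := A)).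
exists (beta_form A bmax); split; first by split; [exists bmax|].
move=> q; rewrite /qdisk qsubr0; split.
- move=> [x [x_sphere ->]].
  exact: Rle_trans (qquad_norm_le A x) (bmax_ge _ (in_pos_sphere_qnorm x_sphere)).
- move=> q_le.
  have [b [b_sphere b_q]] :=
    beta_form_ivt (A_diag0 i0) bmax_sphere (conj (qnorm_ge0 q) q_le).
  have [w w1 ->] := qpolar q.
  have [u u_aligned] := tree_phase_aligned A_oriented i0 A_tree w1.
  by rewrite -b_q; apply: numrange_aligned u_aligned b_sphere.
Qed.
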